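(* Let $G$ be a finite subgroup of the unit circle $S^1=\{z\in\mathbb{C}: |z|=1\}$ (under multiplication). (1) Let $\lambda\in G$. Then there do not exist sets $A,B\subseteq\mathbb{C}^*$ with $|A|\ge 2$ and $|B|\ge 2$ such that $AB=(G-\lambda)\setminus\{0\}$. (2) If $|G|\ge 3$, then for every $\xi,\mu\in\mathbb{C}^*$ and every $A\subseteq\mathbb{C}^*$, we have $A/A\neq(\xi G+\mu)\setminus\{0\}$. (3) If $|G|\ge 3$, then for every $\xi,\mu\in\mathbb{C}^*$ and every $A\subseteq\mathbb{C}^*$, we have $A/A\neq\big((\xi G\cup\{0\})+\mu\big)\setminus\{0\}$.
   Context: $\mathbb{C}^*=\mathbb{C}\setminus\{0\}$. For sets $A,B\subseteq\mathbb{C}^*$: $AB=\{ab: a\in A, b\in B\}$ and $A/A=\{a/b: a,b\in A\}$. For $S\subseteq\mathbb{C}$: $\xi S=\{\xi s: s\in S\}$, $S+\mu=\{s+\mu:s\in S\}$, $S-\lambda=\{s-\lambda: s\in S\}$. *)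

From HB Require Import structures.
From mathcomp Require Import all_boot all_order all_algebra.
From mathcomp Require Import finmap.
From mathcomp Require Import complex.
From mathcomp Require Import boolp classical_sets reals.
Set Implicit Arguments. Unset Strict Implicit. Unset Printing Implicit Defensive.
Import Order.TTheory GRing.Theory Num.Theory.
Local Open Scope ring_scope.
Local Open Scope classical_set_scope.

Definition Cstar (R : realType) : set R[i] := [set z | z != 0].

Definition unit_circle_subgroup (R : realType) (G : {fset R[i]}) : Prop :=
  [/\ (1 \in G)%fset,
      (forall x y, (x \in G)%fset -> (y \in G)%fset -> (x * y \in G)%fset),
      (forall x, (x \in G)%fset -> (x^-1 \in G)%fset) &
      (forall x, (x \in G)%fset -> `|x| = 1)].

Definition setprod (R : realType) (A B : set R[i]) : set R[i] :=
  [set z | exists a b, A a /\ B b /\ z = a * b].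

Definition setquot (R : realType) (A : set R[i]) : set R[i] :=
  [set z | exists a b, A a /\ A b /\ z = a / b].

Definition atleast2 (T : Type) (A : set T) : Prop :=
  exists a1 a2, A a1 /\ A a2 /\ a1 <> a2.

Definition fset_as_set (R : realType) (G : {fset R[i]}) : set R[i] :=
  [set x | (x \in G)%fset].

Definition scaleset (R : realType) (xi : R[i]) (S : set R[i]) : set R[i] :=
  [set z | exists s, S s /\ z = xi * s].

Definition shiftset (R : realType) (S : set R[i]) (mu : R[i]) : set R[i] :=
  [set z | exists s, S s /\ z = s + mu].

(* (1): if a b + lambda lies on the unit circle for all a in A and b in B, then
   p q + (p q)^* = -1 for p = 1/a and q = lambda/b, and this bilinear system has
   no solution with two distinct p and two distinct q.
   (2), (3): A/A is finite, avoids 0 and is closed under inversion, so the Cayley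
   transform (x + 1)/(x - 1), which is odd under x |-> 1/x, sums to 0 over it.
   As 1 = a/a lies in the set, its affine parametrisation can be written
   1 + nu (h - 1) with h in G (or in G and 0), and the sum becomes an explicit
   affine function of 1/nu, because the Cayley transform also sums to 0 over G.
   This pins down nu, and then either mu = 0 or some point of the set lies off
   the unit circle.  When mu = 1 in (3), the inverses of G summing to 0 gives
   the contradiction instead. *)

From HB Require Import structures.
From mathcomp Require Import all_boot all_order all_algebra.
From mathcomp Require Import finmap.
From mathcomp Require Import complex.
From mathcomp Require Import boolp classical_sets reals.
From mathcomp Require Import ring.
Set Implicit Arguments. Unset Strict Implicit. Unset Printing Implicit Defensive.
Import Order.TTheory GRing.Theory Num.Theory.
Local Open Scope ring_scope.
Local Open Scope classical_set_scope.

(* If [det = 0] then (p2, P2) is a multiple of (p1, P1), and the equations force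
   the multiple to be 1; otherwise Cramer's rule for (q, Q) gives q1 = q2. *)
Lemma bilinear_grid_degenerate (F : fieldType) (p1 p2 P1 P2 q1 q2 Q1 Q2 : F) :
    p1 * q1 + P1 * Q1 = -1 -> p1 * q2 + P1 * Q2 = -1 ->
    p2 * q1 + P2 * Q1 = -1 -> p2 * q2 + P2 * Q2 = -1 ->
  p1 = p2 \/ q1 = q2.
Proof.
move=> e11 e12 e21 e22; pose det := p1 * P2 - p2 * P1.
have det_q : det * (q1 - q2) = 0.
  transitivity (P2 * ((p1 * q1 + P1 * Q1) - (p1 * q2 + P1 * Q2))
              - P1 * ((p2 * q1 + P2 * Q1) - (p2 * q2 + P2 * Q2))); first by rewrite /det; ring.
  by rewrite e11 e12 e21 e22; ring.
have det_p : p1 - p2 = - (det * Q1).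
  transitivity ((p1 - p2) * (p1 * q1 + P1 * Q1 + 1)
              - p1 * ((p1 * q1 + P1 * Q1) - (p2 * q1 + P2 * Q1)) - det * Q1); first by rewrite /det; ring.
  by rewrite e11 e21; ring.
have [det0 | /mulfI det_inj] := eqVneq det 0.
  by left; apply/eqP; rewrite -subr_eq0 det_p det0 mul0r oppr0.
by right; apply/eqP; rewrite -subr_eq0; apply/eqP/det_inj; rewrite det_q mulr0.
Qed.

Lemma normD1_div_conjD (C : numClosedFieldType) (z l : C) :
  z != 0 -> `|l| = 1 -> `|z + l| = 1 -> l / z + (l / z)^* = -1.
Proof.
move=> z0 l1 zl1.
have normK1 (x : C) : `|x| = 1 -> x * x^* = 1 by move=> x1; rewrite -normCK x1 expr1n.
have zc0 : z^* != 0 by rewrite conjC_eq0.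
have cross : l * z^* + l^* * z = - (z * z^*).
  transitivity ((z + l) * (z + l)^* - l * l^* - z * z^*); last first.
    by rewrite (normK1 _ zl1) (normK1 _ l1) subrr sub0r.
  by rewrite rmorphD; ring.
rewrite rmorphM fmorphV.
transitivity ((l * z^* + l^* * z) / (z * z^*)); first by field; rewrite z0 zc0.
by rewrite cross mulNr divff // mulf_neq0.
Qed.

Lemma perm_map_in_self (T : eqType) (f : T -> T) (s : seq T) :
  uniq s -> {in s &, injective f} -> {in s, forall x, f x \in s} ->
  perm_eq (map f s) s.
Proof.
move=> s_uniq f_inj f_s; have fs_uniq : uniq (map f s) by rewrite map_inj_in_uniq.
apply: uniq_perm => //; apply: (uniq_min_size fs_uniq _ _).2; last by rewrite size_map.
by move=> _ /mapP[x xs ->]; exact: f_s.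
Qed.

Section Cayley.
Variable F : fieldType.

(* Since [0^-1 = 0], [cayley 1 = 0]: this is what keeps [cayleyV] true at
   [x = 1], so that the sums below can run over whole sets. *)
Definition cayley (x : F) := (x + 1) / (x - 1).

Lemma cayley1 : cayley 1 = 0.
Proof. by rewrite /cayley subrr invr0 mulr0. Qed.

Lemma cayley0 : cayley 0 = -1.
Proof. by rewrite /cayley add0r sub0r mul1r invrN invr1. Qed.

Lemma cayley1D y : y != 0 -> cayley (1 + y) = 1 + 2 / y.
Proof. by move=> y0; rewrite /cayley (addrC 1 y) addrK; field. Qed.

Lemma cayleyV x : x != 0 -> cayley x^-1 = - cayley x.
Proof.
move=> x0; have [-> | x1] := eqVneq x 1; first by rewrite invr1 cayley1 oppr0.
have x1' : x - 1 != 0 by rewrite subr_eq0.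
have x1'' : 1 - x != 0 by rewrite subr_eq0 eq_sym.
by rewrite /cayley; field; rewrite x0 x1' mulN1r x1''.
Qed.

Lemma sum_cayley_nonzero (s : seq F) : uniq s ->
  \sum_(x <- s | x != 0) cayley x = \sum_(x <- s) cayley x + (0 \in s)%:R.
Proof.
move=> s_uniq; rewrite [in RHS](bigID (pred1 0)) /= -addrA addrC.
have -> : \sum_(x <- s | x == 0) cayley x = - (count_mem 0 s)%:R.
  by rewrite -sum1_count natr_sum -sumrN; apply: eq_bigr => x /eqP ->; exact: cayley0.
by rewrite count_uniq_mem // addrK.
Qed.

Lemma sum_cayley_affine (H : seq F) nu : uniq H -> 1 \in H -> nu != 0 ->
  \sum_(h <- H) cayley (1 + nu * (h - 1))
    = (1 - nu^-1) * (size H).-1%:R + nu^-1 * \sum_(h <- H) cayley h.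
Proof.
move=> H_uniq H1 nu0; rewrite !(bigD1_seq 1) //= subrr mulr0 addr0 !cayley1 !add0r.
have size1 : (size H).-1 = count (predC1 1) H.
  by rewrite -(count_predC (pred1 1)) count_uniq_mem // H1.
rewrite size1 -sum1_count natr_sum mulr_sumr mulr_sumr -big_split /=.
apply: eq_bigr => h h1; have h1' : h - 1 != 0 by rewrite subr_eq0.
rewrite cayley1D ?mulf_neq0 // -{2}(subrKC 1 h) cayley1D //.
by field; rewrite h1' nu0.
Qed.

End Cayley.

Lemma sum_cayley_invr_closed (F : numFieldType) (s : seq F) :
  uniq s -> 0 \notin s -> {in s, forall x, x^-1 \in s} -> \sum_(x <- s) cayley x = 0.
Proof.
move=> s_uniq s0 sV.
have sV_perm : perm_eq (map GRing.inv s) s.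
  by apply: perm_map_in_self => //; exact: in2W invr_inj.
have : \sum_(x <- s) cayley x = - \sum_(x <- s) cayley x.
  rewrite -{1}(perm_big _ sV_perm) big_map -sumrN big_seq [RHS]big_seq.
  by apply: eq_bigr => x xs; apply: cayleyV; apply: contraNneq s0 => <-.
by move/eqP; rewrite -addr_eq0 -mulr2n mulrn_eq0 => /eqP.
Qed.

Definition punctured_affine (F : fieldType) (xi mu : F) (H : seq F) : seq F :=
  [seq x <- [seq xi * h + mu | h <- H] | x != 0].

Lemma sum_cayley_punctured_affine (F : numFieldType) (xi mu : F) (H : seq F) :
  let U := punctured_affine xi mu H in
  uniq H -> xi != 0 -> {in U, forall x, x^-1 \in U} ->
  \sum_(h <- H) cayley (xi * h + mu) + (0 \in [seq xi * h + mu | h <- H])%:R = 0.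
Proof.
move=> U H_uniq xi0 UV.
have T_uniq : uniq [seq xi * h + mu | h <- H].
  by rewrite map_inj_uniq // => h h' /addIr/(mulfI xi0).
rewrite -(big_map (fun h => xi * h + mu) xpredT) -sum_cayley_nonzero // -big_filter.
apply: sum_cayley_invr_closed => //; first exact: filter_uniq.
by rewrite mem_filter eqxx.
Qed.

Lemma sum_cayley_affine_mull (F : fieldType) (H : seq F) (xi mu g0 : F) :
  uniq H -> 1 \in H -> perm_eq (map ( *%R g0) H) H ->
  xi * g0 != 0 -> xi * g0 + mu = 1 ->
  \sum_(h <- H) cayley (xi * h + mu)
    = (1 - (xi * g0)^-1) * (size H).-1%:R + (xi * g0)^-1 * \sum_(h <- H) cayley h.
Proof.
move=> H_uniq H1 H_perm nu0 g0_1; rewrite -sum_cayley_affine //.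
rewrite -[LHS](perm_big _ H_perm) big_map; apply: eq_bigr => h _.
have -> : mu = 1 - xi * g0 by rewrite -g0_1 addrAC subrr add0r.
by congr cayley; ring.
Qed.

Lemma punctured_affine_mem1 (F : fieldType) (xi mu : F) (H : seq F) :
  1 \in punctured_affine xi mu H -> exists2 g, g \in H & xi * g + mu = 1.
Proof. by rewrite mem_filter => /andP[_ /mapP[g gH g1]]; exists g. Qed.

Lemma punctured_affine_neq_nil (F : fieldType) (xi mu : F) (H : seq F) :
  xi != 0 -> uniq H -> (1 < size H)%N -> punctured_affine xi mu H != [::].
Proof.
move=> xi0 H_uniq H2; set T := [seq xi * h + mu | h <- H].
have T_uniq : uniq T by rewrite map_inj_uniq // => h h' /addIr/(mulfI xi0).
rewrite -size_eq0 size_filter -lt0n.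
have := count_predC (pred1 0) T; rewrite count_uniq_mem // size_map => sizeH.
by move: H2; rewrite -sizeH; case: (0 \in T) => //= /ltnW.
Qed.

Section UnitCircleSubgroup.
Variables (C : numClosedFieldType) (G : seq C).
Hypotheses (G_uniq : uniq G) (G1 : 1 \in G) (GM : {in G &, forall x y, x * y \in G})
  (GV : {in G, forall x, x^-1 \in G}) (G_norm : {in G, forall x, `|x| = 1}).

Lemma subgroup_neq0 g : g \in G -> g != 0.
Proof. by move=> /G_norm g1; apply: contra_eq_neq g1 => ->; rewrite normr0 eq_sym oner_neq0. Qed.

Lemma subgroup_notin0 : 0 \notin G.
Proof. by apply/negP => /subgroup_neq0; rewrite eqxx. Qed.

Lemma subgroup0_uniq : uniq (0 :: G).
Proof. by rewrite /= subgroup_notin0 G_uniq. Qed.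

Lemma perm_subgroup_mull g : g \in G -> perm_eq (map ( *%R g) G) G.
Proof.
move=> gG; apply: perm_map_in_self G_uniq _ (fun h => GM gG).
exact: in2W (mulfI (subgroup_neq0 gG)).
Qed.

Lemma perm_subgroup0_mull g : g \in G -> perm_eq (map ( *%R g) (0 :: G)) (0 :: G).
Proof. by move=> gG; rewrite /= mulr0 perm_cons perm_subgroup_mull. Qed.

Lemma norm_divr_subgroup0 h g : h \in 0 :: G -> g \in G -> `|h / g| <= 1.
Proof.
move=> + gG; rewrite inE => /predU1P[-> | hG]; first by rewrite mul0r normr0 ler01.
by rewrite G_norm ?GM ?GV.
Qed.

Lemma sum_cayley_subgroup : \sum_(g <- G) cayley g = 0.
Proof. exact: sum_cayley_invr_closed G_uniq subgroup_notin0 GV. Qed.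

Lemma sum_invr_subgroup : (1 < size G)%N -> \sum_(g <- G) g^-1 = 0.
Proof.
move=> G2; have /hasP[h hG h1] : has (predC1 1) G.
  by move: G2; rewrite has_count -(count_predC (pred1 1)) count_uniq_mem // G1.
have : \sum_(g <- G) g^-1 = h^-1 * \sum_(g <- G) g^-1.
  rewrite -{1}(perm_big _ (perm_subgroup_mull hG)) big_map mulr_sumr.
  by apply: eq_bigr => g _; rewrite invfM.
move/eqP; rewrite -subr_eq0 -{1}[\sum_(g <- G) _]mul1r -mulrBl mulf_eq0 subr_eq0.
by rewrite eq_sym invr_eq1 (negbTE h1) => /eqP.
Qed.

Lemma sum_cayley_shift1_subgroup xi : (1 < size G)%N -> xi != 0 ->
  \sum_(h <- G) cayley (xi * h + 1) = (size G)%:R.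
Proof.
move=> G2 xi0; rewrite big_seq (eq_bigr (fun h => 1 + 2 / xi * h^-1)) -?big_seq.
  by rewrite big_split /= -mulr_sumr sum_invr_subgroup // mulr0 addr0 -sum1_size natr_sum.
move=> h hG; rewrite addrC cayley1D ?mulf_neq0 ?(subgroup_neq0 hG) //.
by rewrite invfM mulrA.
Qed.

Lemma punctured_affine_subgroup_not_invr_closed xi mu :
  (3 <= size G)%N -> xi != 0 -> mu != 0 ->
  let U := punctured_affine xi mu G in 1 \in U -> ~ {in U, forall x, x^-1 \in U}.
Proof.
move=> G3 xi0 mu0 U U1 UV.
have [g0 g0G g0_1] := punctured_affine_mem1 U1; set nu := xi * g0 in g0_1.
have g00 := subgroup_neq0 g0G; have nu0 : nu != 0 by rewrite mulf_neq0.
have mu_nu : mu = 1 - nu by rewrite -g0_1 addrAC subrr add0r.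
have n1_gt1 : (1 < (size G).-1)%N by rewrite ltn_predRL.
have := sum_cayley_punctured_affine G_uniq xi0 UV.
rewrite (sum_cayley_affine_mull G_uniq G1 (perm_subgroup_mull g0G) nu0 g0_1).
rewrite sum_cayley_subgroup mulr0 addr0 -/nu.
have [/mapP[h hG h0] | _] := boolP (0 \in _); rewrite /= ?mulr1n ?mulr0n ?addr0 => S.
  have hg0 : h / g0 = 1 - nu^-1.
    have xih : xi * h = nu - 1 by rewrite -[xi * h](addrK mu) -h0 mu_nu sub0r opprB.
    by rewrite -(mulKf xi0 h) xih /nu; field; rewrite xi0 g00.
  have /eqP : `|(1 - nu^-1) * (size G).-1%:R| = 1.
    by move/eqP: S; rewrite addr_eq0 => /eqP ->; rewrite normrN normr1.
  by rewrite normrM -hg0 G_norm ?GM ?GV // mul1r normr_nat pnatr_eq1 gtn_eqF.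
move/eqP: S; rewrite mulf_eq0 pnatr_eq0 (gtn_eqF (ltnW n1_gt1)) orbF subr_eq0.
by rewrite eq_sym invr_eq1 => /eqP nu1; move: mu0; rewrite mu_nu nu1 subrr eqxx.
Qed.

Lemma punctured_shift1_subgroup0_not_invr_closed xi :
  (1 < size G)%N -> xi != 0 ->
  let U := punctured_affine xi 1 (0 :: G) in ~ {in U, forall x, x^-1 \in U}.
Proof.
move=> G2 xi0 U UV; have := sum_cayley_punctured_affine subgroup0_uniq xi0 UV.
rewrite big_cons mulr0 add0r cayley1 add0r sum_cayley_shift1_subgroup //.
by move/eqP; rewrite -natrD pnatr_eq0 addn_eq0 eqn0Ngt (ltnW G2).
Qed.

Lemma punctured_affine_subgroup0_not_invr_closed xi mu :
  (3 <= size G)%N -> xi != 0 -> mu != 0 -> mu != 1 ->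
  let U := punctured_affine xi mu (0 :: G) in 1 \in U -> ~ {in U, forall x, x^-1 \in U}.
Proof.
move=> G3 xi0 mu0 mu1 U U1 UV.
have [g0 + g0_1] := punctured_affine_mem1 U1; rewrite inE => /predU1P[g00 | g0G].
  by move: mu1; rewrite -g0_1 g00 mulr0 add0r eqxx.
set nu := xi * g0 in g0_1.
have g00 := subgroup_neq0 g0G; have nu0 : nu != 0 by rewrite mulf_neq0.
have mu_nu : mu = 1 - nu by rewrite -g0_1 addrAC subrr add0r.
have := sum_cayley_punctured_affine subgroup0_uniq xi0 UV.
rewrite (sum_cayley_affine_mull subgroup0_uniq (mem_behead (s := 0 :: G) G1)
  (perm_subgroup0_mull g0G) nu0 g0_1).
rewrite big_cons cayley0 sum_cayley_subgroup addr0 /= -/nu.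
set n : C := (size G)%:R.
have n0 : n != 0 by rewrite pnatr_eq0 eqn0Ngt (ltnW (ltnW G3)).
have n1_0 : n + 1 != 0 by rewrite -(natrD _ _ 1) pnatr_eq0 addn1.
have [_ | _] := boolP (0 \in _); rewrite /= ?mulr1n ?mulr0n ?addr0 => S.
  have : (1 - nu^-1) * (n + 1) = 0 by rewrite -[RHS]S; ring.
  move/eqP; rewrite mulf_eq0 (negbTE n1_0) orbF subr_eq0 eq_sym invr_eq1 => /eqP nu1.
  by move: mu0; rewrite mu_nu nu1 subrr eqxx.
have nu_n : nu = (n + 1) / n.
  have : nu^-1 * (n + 1) = n by apply/eqP; rewrite -subr_eq0 -oppr_eq0 -S; apply/eqP; ring.
  by move=> nuV_n; rewrite -[nu]invrK -(mulfK n1_0 nu^-1) nuV_n invf_div.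
have muU : mu \in U by rewrite mem_filter mu0 /= mulr0 add0r mem_head.
have /UV := muU; rewrite mem_filter => /andP[_ /mapP[h hG0 muV]].
have hg0 : h / g0 = 1 - n.
  have -> : h / g0 = (mu^-1 - mu) / nu by rewrite muV addrK /nu; field; rewrite g00 xi0.
  have n_n1 : n - (n + 1) != 0 by rewrite opprD addrA subrr sub0r oppr_eq0 oner_neq0.
  by rewrite mu_nu nu_n; field; rewrite n0 n1_0 n_n1.
have n_pred : 1 - n = - ((size G).-1)%:R.
  by rewrite /n -(ltn_predK G3) mulrSr opprD addrCA subrr addr0.
have := norm_divr_subgroup0 hG0 g0G.
by rewrite hg0 n_pred normrN normr_nat lern1 leqNgt ltn_predRL G3.
Qed.

End UnitCircleSubgroup.

Lemma setquotV (R : realType) (A : set R[i]) x : setquot A x -> setquot A x^-1.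
Proof. by move=> [a [b [Aa [Ab ->]]]]; exists b, a; rewrite invf_div. Qed.

Lemma setquot1 (R : realType) (A : set R[i]) x :
  A `<=` @Cstar R -> setquot A x -> setquot A 1.
Proof. by move=> Astar [a [_ [Aa _]]]; exists a, a; rewrite divff //; exact: Astar. Qed.

Lemma setquot_seq_invr_closed (R : realType) (A : set R[i]) (U : seq R[i]) :
  setquot A = [set x | x \in U] -> {in U, forall x, x^-1 \in U}.
Proof. by move=> E x xU; have /setquotV : setquot A x by [rewrite E]; rewrite E. Qed.

Lemma setquot_seq_mem1 (R : realType) (A : set R[i]) (U : seq R[i]) :
  A `<=` @Cstar R -> setquot A = [set x | x \in U] -> U != [::] -> 1 \in U.
Proof.
case: U => // x U Astar E _; have : setquot A x by rewrite E /= mem_head.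
by move/(setquot1 Astar); rewrite E.
Qed.

Lemma shift_scale_punctured_affine (R : realType) (xi mu : R[i]) (H : seq R[i]) :
  shiftset (scaleset xi [set h | h \in H]) mu `\` [set 0]
    = [set x | x \in punctured_affine xi mu H].
Proof.
apply/seteqP; split => x /=.
  move=> [[_ [[h [hH ->]] ->]] x0]; rewrite mem_filter (map_f (fun h => xi * h + mu)) // andbT; exact/eqP.
rewrite mem_filter => /andP[x0 /mapP[h hH x_eq]]; subst x.
split; last exact/eqP.
by exists (xi * h); split => //; exists h.
Qed.

Lemma scaleset_cons0 (R : realType) (xi : R[i]) (H : seq R[i]) :
  scaleset xi [set h | h \in 0 :: H] = scaleset xi [set h | h \in H] `|` [set 0].
Proof.
apply/seteqP; split => x /=.
  move=> [h [+ ->]]; rewrite /= inE => /predU1P[-> | hH]; first by right; rewrite mulr0.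
  by left; exists h.
case=> [[h [hH ->]] | ->]; first by exists h; rewrite /= inE hH orbT.
by exists 0; rewrite mulr0 /= mem_head.
Qed.

Lemma setprod_neq_unit_shift (R : realType) (G : {fset R[i]}) :
  unit_circle_subgroup G ->
  forall lambda : R[i], (lambda \in G)%fset ->
     ~ exists A B : set R[i],
         [/\ A `<=` @Cstar R, B `<=` @Cstar R, atleast2 A, atleast2 B &
             setprod A B = shiftset (fset_as_set G) (- lambda) `\` [set 0]].
Proof.
move=> [_ _ _ Gn] l lG [A [B [Astar Bstar [a1 [a2 [Aa1 [Aa2 a12]]]] [b1 [b2 [Bb1 [Bb2 b12]]]] E]]].
have l0 := subgroup_neq0 Gn lG.
have key a b : A a -> B b -> a^-1 * (l / b) + a^-1^* * (l / b)^* = -1.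
  move=> Aa Bb; have : setprod A B (a * b) by exists a, b.
  rewrite E => -[[s [sG ab_s]] _].
  rewrite -rmorphM (_ : a^-1 * (l / b) = l / (a * b)); last by rewrite invfM mulrCA.
  apply: normD1_div_conjD; first by rewrite mulf_neq0 //; [exact: Astar | exact: Bstar].
    exact: Gn.
  by rewrite ab_s subrK; exact: Gn.
have [/invr_inj // | /(mulfI l0)/invr_inj //] :=
  bilinear_grid_degenerate (key _ _ Aa1 Bb1) (key _ _ Aa1 Bb2) (key _ _ Aa2 Bb1) (key _ _ Aa2 Bb2).
Qed.

Lemma setquot_neq_punctured_subgroup (R : realType) (G : {fset R[i]}) :
  unit_circle_subgroup G -> (3 <= #|` G|)%N ->
  forall (xi mu : R[i]), xi != 0 -> mu != 0 ->
  forall A : set R[i], A `<=` @Cstar R ->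
    setquot A <> shiftset (scaleset xi (fset_as_set G)) mu `\` [set 0].
Proof.
move=> [G1 GM GV Gn] G3 xi mu xi0 mu0 A Astar E.
have {}E : setquot A = [set x | x \in punctured_affine xi mu G].
  by rewrite E -shift_scale_punctured_affine.
have U1 := setquot_seq_mem1 Astar E (punctured_affine_neq_nil mu xi0 (fset_uniq G) (ltnW G3)).
exact: (punctured_affine_subgroup_not_invr_closed (fset_uniq G) G1 GM GV Gn G3 xi0 mu0 U1
  (setquot_seq_invr_closed E)).
Qed.

Lemma setquot_neq_punctured_subgroup0 (R : realType) (G : {fset R[i]}) :
  unit_circle_subgroup G -> (3 <= #|` G|)%N ->
  forall (xi mu : R[i]), xi != 0 -> mu != 0 ->
  forall A : set R[i], A `<=` @Cstar R ->
    setquot A <> shiftset (scaleset xi (fset_as_set G) `|` [set 0]) mu `\` [set 0].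
Proof.
move=> [G1 GM GV Gn] G3 xi mu xi0 mu0 A Astar E.
have {}E : setquot A = [set x | x \in punctured_affine xi mu (0 :: G)].
  by rewrite E -shift_scale_punctured_affine scaleset_cons0.
have UV := setquot_seq_invr_closed E.
have [mu1 | mu1] := eqVneq mu 1.
  by move: UV; rewrite mu1; exact: (punctured_shift1_subgroup0_not_invr_closed
    (fset_uniq G) G1 GM Gn (ltnW G3) xi0).
have U0_nil := punctured_affine_neq_nil mu xi0 (subgroup0_uniq (fset_uniq G) Gn) (ltnW (ltnW G3)).
have U1 := setquot_seq_mem1 Astar E U0_nil.
exact: (punctured_affine_subgroup0_not_invr_closed (fset_uniq G) G1 GM GV Gn G3 xi0 mu0 mu1 U1 UV).
Qed.

Theorem theorem1p12 (R : realType) (G : {fset R[i]}) :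
  unit_circle_subgroup G ->
  (* (1) *)
  (forall lambda : R[i], (lambda \in G)%fset ->
     ~ exists A B : set R[i],
         [/\ A `<=` @Cstar R, B `<=` @Cstar R, atleast2 A, atleast2 B &
             setprod A B = shiftset (fset_as_set G) (- lambda) `\` [set 0]]) /\
  (* (2) *)
  ((3 <= #|` G|)%N ->
     forall (xi mu : R[i]), xi != 0 -> mu != 0 ->
     forall A : set R[i], A `<=` @Cstar R ->
       setquot A <> shiftset (scaleset xi (fset_as_set G)) mu `\` [set 0]) /\
  (* (3) *)
  ((3 <= #|` G|)%N ->
     forall (xi mu : R[i]), xi != 0 -> mu != 0 ->
     forall A : set R[i], A `<=` @Cstar R ->
       setquot A <>
         shiftset (scaleset xi (fset_as_set G) `|` [set 0]) mu `\` [set 0]).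
Proof.
move=> hG; split; first exact: setprod_neq_unit_shift.
by split; [exact: setquot_neq_punctured_subgroup | exact: setquot_neq_punctured_subgroup0].
Qed.
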